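(* Let $0<q<1$, $\tau,\sigma\in\mathbb{R}$ and $\phi\in[0,2\pi)$. Let $\{e_n\}_{n\in\mathbb{Z}_+}$ be the standard orthonormal basis of $\ell^2(\mathbb{Z}_+)$ (with $e_{-1}=0$), and define bounded operators $A,C$ on $\ell^2(\mathbb{Z}_+)$ by $Ae_n=\sqrt{1-q^{2n}}\,e_{n-1}$, $Ce_n=e^{i\phi}q^ne_n$. Let $$R=\tfrac12\Big(A^2+(A^* )^2+qC^2+q(C^* )^2+iq(q^{-\sigma}-q^{\sigma})(A^*C-C^*A)-iq(q^{-\tau}-q^{\tau})(CA-A^*C^* )-q(q^{-\sigma}-q^{\sigma})(q^{-\tau}-q^{\tau})C^*C\Big).$$ For $\lambda\in\{-q^{2k}\mid k\in\mathbb{Z}_+\}\cup\{q^{2\tau+2k}\mid k\in\mathbb{Z}_+\}$ let $$v_\lambda^\phi=\sum_{n=0}^\infty i^n e^{in\phi}p_n(\lambda)e_n,\qquad p_n(\lambda)=\frac{q^{-n\tau}q^{\frac12 n(n-1)}}{\sqrt{(q^2;q^2)_n}}\;{}_2\varphi_1\!\left(q^{-2n},\,q^{2\tau}/\lambda;\,0;\,q^2,\,-q^2\lambda\right).$$ Then for every such $\lambda$, $$2Rv_\lambda^\phi=qe^{-2i\phi}v^\phi_{\lambda q^2}+q^{-1}e^{2i\phi}(1-q^{-2\tau}\lambda)(1+\lambda)v^\phi_{\lambda/q^2}+\lambda q^{1-\tau}(q^{-\sigma}-q^{\sigma})v^\phi_\lambda,$$ where the middle term is interpreted as $0$ when its coefficient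 vanishes (i.e. for $\lambda=-1$ and $\lambda=q^{2\tau}$).
   Context: $R$ is the image of the element $\rho_{\tau,\sigma}$ of the quantum $SU(2)$ $C^*$-algebra under the representation $\pi_\phi$ ($\alpha\mapsto A$, $\gamma\mapsto C$). For $k\in\mathbb{Z}_+\cup\{\infty\}$, $(a;q)_k=\prod_{i=0}^{k-1}(1-aq^i)$, and ${}_2\varphi_1(a,b;c;p,z)=\sum_{j\ge0}\frac{(a;p)_j(b;p)_j}{(p;p)_j(c;p)_j}z^j$. The vectors $v_\lambda^\phi$ lie in $\ell^2(\mathbb{Z}_+)$ and form an orthogonal basis of it. *)

From HB Require Import structures.
From mathcomp Require Import all_boot all_order all_algebra.
From mathcomp Require Import all_classical all_reals all_analysis.
From mathcomp Require Import complex.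
Set Implicit Arguments. Unset Strict Implicit. Unset Printing Implicit Defensive.
Import Order.TTheory GRing.Theory Num.Theory.
Local Open Scope ring_scope.
Local Open Scope complex_scope.

Section Defs.
Variable R : realType.

Definition qpoch (a p : R) (k : nat) : R := \prod_(i < k) (1 - a * p ^+ i).

Definition phi21 (a b c p z : R) : R :=
  limn (fun N => \sum_(j < N)
          (qpoch a p j * qpoch b p j / (qpoch p p j * qpoch c p j) * z ^+ j)).

Definition expi (x : R) : R[i] := cos x +i* sin x.

Definition pn (q tau : R) (n : nat) (lam : R) : R :=
  powR q (- (n%:R * tau)) * powR q (n%:R * (n%:R - 1) / 2)
  / Num.sqrt (qpoch (q ^+ 2) (q ^+ 2) n)
  * phi21 (q ^+ (2 * n))^-1 (powR q (2 * tau) / lam) 0 (q ^+ 2) (- q ^+ 2 * lam).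

(* coordinates of v_lambda^phi in the standard basis e_n of l^2(Z_+) *)
Definition vlam (q tau phi lam : R) (n : nat) : R[i] :=
  'i ^+ n * expi (n%:R * phi) * (pn q tau n lam)%:C.

(* Operators on coordinate sequences: A e_n = sqrt(1-q^{2n}) e_{n-1},
   C e_n = e^{i phi} q^n e_n, and their adjoints. *)
Definition Aop (q : R) (v : nat -> R[i]) (m : nat) : R[i] :=
  (Num.sqrt (1 - q ^+ (2 * m.+1)))%:C * v m.+1.
Definition Adag (q : R) (v : nat -> R[i]) (m : nat) : R[i] :=
  if m is m'.+1 then (Num.sqrt (1 - q ^+ (2 * m)))%:C * v m' else 0.
Definition Cop (q phi : R) (v : nat -> R[i]) (m : nat) : R[i] :=
  expi phi * (q ^+ m)%:C * v m.
Definition Cdag (q phi : R) (v : nat -> R[i]) (m : nat) : R[i] :=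
  expi (- phi) * (q ^+ m)%:C * v m.

Definition Rop (q tau sigma phi : R) (v : nat -> R[i]) (m : nat) : R[i] :=
  let A := Aop q in let Ad := Adag q in
  let C := Cop q phi in let Cd := Cdag q phi in
  let s := (powR q (- sigma) - powR q sigma) in
  let t := (powR q (- tau) - powR q tau) in
  (1 / 2)%:C *
  ( A (A v) m + Ad (Ad v) m + q%:C * C (C v) m + q%:C * Cd (Cd v) m
  + 'i * (q * s)%:C * (Ad (C v) m - Cd (A v) m)
  - 'i * (q * t)%:C * (C (A v) m - Ad (Cd v) m)
  - (q * s * t)%:C * Cd (C v) m ).
End Defs.

(* Put Q = q^2, T = q^(2 tau) and u = q^(-tau).  For lam <> 0 the terminating
   2phi1 in p_n(lam) is P_n(lam) = sum_j a_(n,j) (lam - T)(lam - T Q)...(lam - T Q^(j-1)),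
   so p_n = c_n P_n with weight_(n+1) c_(n+1) = u q^n c_n.  Comparing coefficients in
   this basis gives the three-term recurrence of P_n in n and the q-difference
   relations in lam, for lam -> Q lam as well as for lam -> lam / Q.
   Conjugating by the phases i^n e^(i n phi) turns A, A^*, C, C^* into real weighted
   shifts times i e^(i phi), its inverse, e^(i phi) and e^(-i phi).  Hence 2R splits
   into a part carrying e^(2 i phi), one carrying e^(-2 i phi) and a phase-free part
   q (q^-sigma - q^sigma) J with J a Jacobi operator.  The recurrence says
   J p = u lam p, and the two q-difference relations identify the other two parts
   with multiples of p(lam / Q) and p(Q lam). *)

From HB Require Import structures.
From mathcomp Require Import all_boot all_order all_algebra.
From mathcomp Require Import all_classical all_reals all_analysis.
From mathcomp Require Import complex.
From mathcomp Require Import ring zify.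
Set Implicit Arguments. Unset Strict Implicit. Unset Printing Implicit Defensive.
Import Order.TTheory GRing.Theory Num.Theory.
Local Open Scope ring_scope.
Local Open Scope complex_scope.

Section QPochhammer.
Variable R : realType.
Implicit Types a p : R.

Lemma qpoch0 a p : qpoch a p 0 = 1.
Proof. by rewrite /qpoch big_ord0. Qed.

Lemma qpochS a p j : qpoch a p j.+1 = qpoch a p j * (1 - a * p ^+ j).
Proof. by rewrite /qpoch big_ord_recr. Qed.

Lemma qpochSl a p j : qpoch a p j.+1 = (1 - a) * qpoch (a * p) p j.
Proof.
rewrite /qpoch big_ord_recl expr0 mulr1; congr (_ * _).
by apply: eq_bigr => i _; rewrite exprS mulrA.
Qed.

Lemma qpoch_0l p j : qpoch 0 p j = 1.
Proof. by rewrite /qpoch big1 // => i _; rewrite mul0r subr0. Qed.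

Lemma qpoch_gt0 p j : 0 < p < 1 -> 0 < qpoch p p j.
Proof.
case/andP=> p0 p1; rewrite /qpoch; apply: prodr_gt0 => i _.
by rewrite subr_gt0 -exprS exprn_ilt1 // ltW.
Qed.

End QPochhammer.

Section BasicHypergeometricPolynomial.
Variables (R : realType) (Q T : R).
Hypotheses (Q_gt0 : 0 < Q) (Q_lt1 : Q < 1).

Definition acoef n j := qpoch (Q ^+ n)^-1 Q j / qpoch Q Q j * (- Q) ^+ j.
Definition qbasis (x : R) j := \prod_(i < j) (x - T * Q ^+ i).
Definition qpoly n x := \sum_(j < n.+1) acoef n j * qbasis x j.

Lemma Q_neq0 : Q != 0.
Proof. by rewrite gt_eqF. Qed.

Lemma expQ_neq0 n : Q ^+ n != 0.
Proof. by rewrite expf_neq0 // Q_neq0. Qed.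

Lemma onemQS_neq0 n : 1 - Q ^+ n.+1 != 0.
Proof. by rewrite subr_eq0 eq_sym lt_eqF // exprn_ilt1 // ltW. Qed.

Lemma qpochQ_neq0 j : qpoch Q Q j != 0.
Proof. by rewrite gt_eqF // qpoch_gt0 // Q_gt0. Qed.

Lemma acoef0 n : acoef n 0 = 1.
Proof. by rewrite /acoef !qpoch0 expr0 divr1 mulr1. Qed.

Lemma acoefS n j :
  acoef n j.+1 = (Q ^+ j - Q ^+ n) * Q / (Q ^+ n * (1 - Q ^+ j.+1)) * acoef n j.
Proof.
rewrite /acoef !qpochS !exprS; field.
by rewrite -exprS qpochQ_neq0 onemQS_neq0 expQ_neq0.
Qed.

Lemma acoefSS n j :
  acoef n.+1 j.+1 = (1 - Q ^+ n.+1) / (Q ^+ n * (1 - Q ^+ j.+1)) * acoef n j.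
Proof.
have shift : (Q ^+ n.+1)^-1 * Q = (Q ^+ n)^-1.
  by rewrite exprS invfM mulrAC mulVf ?mul1r ?Q_neq0.
rewrite /acoef qpochSl shift !qpochS !exprS; field.
by rewrite -exprS qpochQ_neq0 onemQS_neq0 expQ_neq0 Q_neq0.
Qed.

Lemma acoef_eq0 n j : (n < j)%N -> acoef n j = 0.
Proof.
elim: j => // j IHj; rewrite ltnS leq_eqVlt acoefS => /predU1P[<-|/IHj->].
  by rewrite subrr !mul0r.
by rewrite mulr0.
Qed.

Lemma acoef_pascal n j : Q ^+ n * (acoef n.+1 j.+1 - acoef n j.+1) = acoef n j.
Proof.
rewrite acoefSS acoefS !exprS; field.
by rewrite -exprS onemQS_neq0 expQ_neq0.
Qed.

Lemma acoef_contiguous n j :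
  (1 - Q ^+ n.+1) * acoef n j + Q ^+ n.+1 * acoef n.+1 j = Q ^+ j * acoef n.+1 j.
Proof.
case: j => [|j]; first by rewrite !acoef0 expr0; ring.
rewrite acoefSS acoefS !exprS; field.
by rewrite -exprS onemQS_neq0 expQ_neq0.
Qed.

Lemma qbasis0 x : qbasis x 0 = 1.
Proof. by rewrite /qbasis big_ord0. Qed.

Lemma qbasisS x j : qbasis x j.+1 = qbasis x j * (x - T * Q ^+ j).
Proof. by rewrite /qbasis big_ord_recr. Qed.

Lemma qbasis_qdiff x j :
  qbasis x j.+1 - qbasis (Q * x) j.+1 = (1 - Q ^+ j.+1) * x * qbasis x j.
Proof.
have scale : \prod_(i < j) (Q * x - T * Q ^+ i.+1) = Q ^+ j * qbasis x j.
  rewrite /qbasis -[in Q ^+ j](card_ord j) -prodr_const -big_split /=.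
  by apply: eq_bigr => i _; rewrite exprS; ring.
rewrite qbasisS {2}/qbasis big_ord_recl /= scale expr0 mulr1 exprS; ring.
Qed.

Lemma qbasisE x j : x != 0 -> qbasis x j = qpoch (T / x) Q j * x ^+ j.
Proof.
move=> x_neq0; rewrite /qbasis /qpoch -[in x ^+ j](card_ord j) -prodr_const.
by rewrite -big_split; apply: eq_bigr => i _ /=; field.
Qed.

Lemma qpoly_sum n N x :
  (n < N)%N -> qpoly n x = \sum_(j < N) acoef n j * qbasis x j.
Proof.
move=> /subnKC <-; rewrite big_split_ord /= [X in _ = _ + X]big1 ?addr0 //.
by move=> i _; rewrite acoef_eq0 ?mul0r // ltnS leq_addr.
Qed.

Lemma qpoly0 x : qpoly 0 x = 1.
Proof. by rewrite /qpoly big_ord1 acoef0 qbasis0 mulr1. Qed.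

Lemma qpoly1 x : qpoly 1 x = 1 + x - T.
Proof.
rewrite /qpoly big_ord_recr big_ord1 /= acoefS acoef0 qbasisS qbasis0.
rewrite !expr0 !expr1 mulr1; field.
by rewrite -[Q in 1 - Q]expr1 onemQS_neq0 Q_neq0.
Qed.

Lemma qpoly_qshift n x : qpoly n.+1 (Q * x)
  = qpoly n.+1 x - (1 - Q ^+ n.+1) * x * qpoly n x / Q ^+ n.
Proof.
have lowering : Q ^+ n * (qpoly n.+1 x - qpoly n.+1 (Q * x))
    = (1 - Q ^+ n.+1) * x * qpoly n x.
  rewrite /qpoly -sumrB big_ord_recl !qbasis0 subrr add0r !mulr_sumr.
  apply: eq_bigr => j _; rewrite -mulrBr lift0 qbasis_qdiff acoefSS.
  by field; rewrite onemQS_neq0 expQ_neq0.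
by rewrite -lowering; field; rewrite expQ_neq0.
Qed.

Lemma mulX_qpoly n x : x * qpoly n.+1 x =
  Q ^+ n.+1 * (qpoly n.+2 x - qpoly n.+1 x)
  + T * ((1 - Q ^+ n.+1) * qpoly n x + Q ^+ n.+1 * qpoly n.+1 x).
Proof.
(* x * qbasis x j = qbasis x j.+1 + T * Q ^+ j * qbasis x j splits the product
   into a shifted and a diagonal sum. *)
have shifted : \sum_(j < n.+3) acoef n.+1 j * qbasis x j.+1
    = Q ^+ n.+1 * (qpoly n.+2 x - qpoly n.+1 x).
  rewrite (@qpoly_sum n.+2 n.+4) // (@qpoly_sum n.+1 n.+4); last by lia.
  rewrite -sumrB [X in _ = _ * X]big_ord_recl !acoef0 subrr add0r mulr_sumr.
  by apply: eq_bigr => j _; rewrite lift0 -mulrBl mulrA acoef_pascal.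
have diagonal : \sum_(j < n.+3) T * Q ^+ j * acoef n.+1 j * qbasis x j
    = T * ((1 - Q ^+ n.+1) * qpoly n x + Q ^+ n.+1 * qpoly n.+1 x).
  rewrite (@qpoly_sum n.+1 n.+3) // (@qpoly_sum n n.+3); last by lia.
  rewrite !mulr_sumr -big_split mulr_sumr /=.
  by apply: eq_bigr => j _; rewrite -[T * _ * _]mulrA -acoef_contiguous; ring.
rewrite -shifted -diagonal (@qpoly_sum _ n.+3) // mulr_sumr -big_split /=.
by apply: eq_bigr => j _; rewrite qbasisS; ring.
Qed.

Lemma qpoly_recurrence n x : qpoly n.+2 x =
  ((x + (1 - T) * Q ^+ n.+1) * qpoly n.+1 x - T * (1 - Q ^+ n.+1) * qpoly n x)
  / Q ^+ n.+1.
Proof.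
apply: (mulfI (expQ_neq0 n.+1)); rewrite mulrCA divff ?expQ_neq0 // mulr1.
by rewrite mulrDl mulX_qpoly; ring.
Qed.

Lemma qpoly_raising n x :
  (T - x) * (1 + x) * qpoly n (x / Q) = T * qpoly n x - x * qpoly n.+1 x.
Proof.
set y := x / Q; have -> : x = Q * y by rewrite /y mulrC divfK ?Q_neq0.
case: n => [|n]; first by rewrite !qpoly0 qpoly1; ring.
rewrite !qpoly_qshift qpoly_recurrence !exprS.
by field; rewrite expQ_neq0 Q_neq0.
Qed.

End BasicHypergeometricPolynomial.

Section ExpI.
Variable R : realType.

Lemma expiD (x y : R) : expi (x + y) = expi x * expi y.
Proof.
rewrite /expi cosD sinD; apply/eqP; rewrite eq_complex /=.
by apply/andP; split; apply/eqP; ring.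
Qed.

Lemma expiNK (x : R) : expi x * expi (- x) = 1.
Proof. by rewrite -expiD subrr /expi cos0 sin0. Qed.

Lemma expiSn n (x : R) : expi (n.+1%:R * x) = expi (n%:R * x) * expi x.
Proof. by rewrite -natr1 mulrDl mul1r expiD. Qed.

Lemma expi2 (x : R) : expi (2 * x) = expi x * expi x.
Proof. by rewrite mulrDl mul1r expiD. Qed.

Lemma mulii : 'i * 'i = -1 :> R[i].
Proof. by rewrite -expr2 sqr_i. Qed.

End ExpI.

Section SequenceOperators.
Variable R : realType.
Implicit Types (q phi : R) (p : nat -> R).

Definition weight q n := Num.sqrt (1 - q ^+ (2 * n)).
Definition Aseq q p n := weight q n.+1 * p n.+1.
Definition Adagseq q p n := if n is m.+1 then weight q n * p m else 0.
Definition Cseq q p n := q ^+ n * p n.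

Definition gauge phi p n : R[i] := 'i ^+ n * expi (n%:R * phi) * (p n)%:C.

Lemma gaugeZ phi (k : R) p n : gauge phi (fun m => k * p m) n = k%:C * gauge phi p n.
Proof. by rewrite /gauge rmorphM /=; ring. Qed.

Lemma AopZ q k (v : nat -> R[i]) : Aop q (fun m => k * v m) = fun m => k * Aop q v m.
Proof. by apply/funext => m; rewrite /Aop; ring. Qed.

Lemma AdagZ q k (v : nat -> R[i]) : Adag q (fun m => k * v m) = fun m => k * Adag q v m.
Proof. by apply/funext => -[|m]; rewrite /Adag ?mulr0 //; ring. Qed.

Lemma CopZ q phi k (v : nat -> R[i]) :
  Cop q phi (fun m => k * v m) = fun m => k * Cop q phi v m.
Proof. by apply/funext => m; rewrite /Cop; ring. Qed.

Lemma CdagZ q phi k (v : nat -> R[i]) :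
  Cdag q phi (fun m => k * v m) = fun m => k * Cdag q phi v m.
Proof. by apply/funext => m; rewrite /Cdag; ring. Qed.

Lemma Aop_gauge q phi p :
  Aop q (gauge phi p) = fun m => 'i * expi phi * gauge phi (Aseq q p) m.
Proof.
by apply/funext => m; rewrite /Aop /gauge /Aseq exprS expiSn rmorphM /=; ring.
Qed.

Lemma Adag_gauge q phi p :
  Adag q (gauge phi p) = fun m => - 'i * expi (- phi) * gauge phi (Adagseq q p) m.
Proof.
apply/funext => -[|m]; rewrite /Adag /gauge /Adagseq ?rmorph0 ?mulr0 //.
by rewrite exprS expiSn rmorphM /=; ring: (@mulii R) (expiNK phi).
Qed.

Lemma Cop_gauge q phi p :
  Cop q phi (gauge phi p) = fun m => expi phi * gauge phi (Cseq q p) m.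
Proof. by apply/funext => m; rewrite /Cop /gauge /Cseq rmorphM /=; ring. Qed.

Lemma Cdag_gauge q phi p :
  Cdag q phi (gauge phi p) = fun m => expi (- phi) * gauge phi (Cseq q p) m.
Proof. by apply/funext => m; rewrite /Cdag /gauge /Cseq rmorphM /=; ring. Qed.

End SequenceOperators.

Section GaugeDecomposition.
Variable R : realType.
Implicit Types (q t phi : R) (p : nat -> R).

Definition qsinh q x := powR q (- x) - powR q x.

Definition raise_part q t p n :=
  q * Cseq q (Cseq q p) n - Aseq q (Aseq q p) n + q * t * Cseq q (Aseq q p) n.
Definition lower_part q t p n :=
  q * Cseq q (Cseq q p) n - Adagseq q (Adagseq q p) n + q * t * Adagseq q (Cseq q p) n.
Definition jacobi q t p n :=
  Adagseq q (Cseq q p) n + Cseq q (Aseq q p) n - t * Cseq q (Cseq q p) n.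

Lemma Rop_gauge q tau sigma phi p n :
  2 * Rop q tau sigma phi (gauge phi p) n =
    expi (2 * phi) * gauge phi (raise_part q (qsinh q tau) p) n
  + expi (- (2 * phi)) * gauge phi (lower_part q (qsinh q tau) p) n
  + (q * qsinh q sigma)%:C * gauge phi (jacobi q (qsinh q tau) p) n.
Proof.
have half : 2 * (1 / 2)%:C = 1 :> R[i].
  by rewrite -(rmorph_nat (real_complex R) 2) -rmorphM mul1r divff ?rmorph1.
rewrite /Rop /= mulrA half mul1r.
rewrite !(Aop_gauge, Adag_gauge, Cop_gauge, Cdag_gauge, AopZ, AdagZ, CopZ, CdagZ).
rewrite /gauge /raise_part /lower_part /jacobi /qsinh -(mulrN 2 phi) !expi2.
rewrite !(rmorphD, rmorphB, rmorphN, rmorphM) /=.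
ring: (@mulii R) (expiNK phi).
Qed.

End GaugeDecomposition.

Lemma limn_sum_finite_support (R : realType) (f : nat -> R) (N : nat) :
  (forall j, (N <= j)%N -> f j = 0) ->
  limn (fun M => \sum_(j < M) f j) = \sum_(j < N) f j.
Proof.
move=> f_eq0; apply: cvg_lim => //; apply: cvg_near_cst; near=> M.
have /subnKC <- : (N <= M)%N by near: M; apply: nbhs_infty_ge.
rewrite big_split_ord /= [X in _ + X]big1 ?addr0 // => i _.
by rewrite f_eq0 ?leq_addr.
Unshelve. all: by end_near.
Qed.

Section NormalizedPolynomials.
Variables (R : realType) (q tau : R).
Hypotheses (q_gt0 : 0 < q) (q_lt1 : q < 1).

Local Notation Q := (q ^+ 2).
Local Notation T := (powR q (2 * tau)).
Local Notation u := (powR q (- tau)).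
Local Notation P := (qpoly Q T).

Lemma sqrq_gt0 : 0 < Q.
Proof. exact: exprn_gt0. Qed.

Lemma sqrq_lt1 : Q < 1.
Proof. by rewrite exprn_ilt1 // ltW. Qed.

#[local] Hint Resolve sqrq_gt0 sqrq_lt1 : core.

Lemma sqrq_exp n : Q ^+ n = q ^+ n * q ^+ n.
Proof. by rewrite -exprM mulnC exprM expr2. Qed.

Lemma powRqD a b : powR q (a + b) = powR q a * powR q b.
Proof. by rewrite powRD // (lt0r_neq0 q_gt0) implybT. Qed.

Lemma u_gt0 : 0 < u.
Proof. exact: powR_gt0. Qed.

Lemma powR_N2tau : powR q (- (2 * tau)) = u ^+ 2.
Proof. by rewrite expr2 -powRqD -opprD mulrDl mul1r. Qed.

Lemma powR_2tau : T = (u ^+ 2)^-1.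
Proof. by rewrite -powR_N2tau powRN invrK. Qed.

Lemma powR_1Btau : powR q (1 - tau) = q * u.
Proof. by rewrite powRqD powRr1 // ltW. Qed.

Lemma qsinh_tau : qsinh q tau = u - u^-1.
Proof. by rewrite /qsinh powRN invrK. Qed.

Definition pscale n := powR q (- (n%:R * tau)) * powR q (n%:R * (n%:R - 1) / 2)
  / Num.sqrt (qpoch Q Q n).

Lemma weight_gt0 n : 0 < weight q n.+1.
Proof. by rewrite sqrtr_gt0 subr_gt0 exprn_ilt1 // ltW. Qed.

Local Ltac nonzero := rewrite !gt_eqF ?u_gt0 ?weight_gt0 ?exprn_gt0.

Lemma weight_sqr n : weight q n.+1 ^+ 2 = 1 - Q ^+ n.+1.
Proof. by rewrite sqr_sqrtr -?exprM // subr_ge0 ltW // exprn_ilt1 // ltW. Qed.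

Lemma weight_pscale n : weight q n.+1 * pscale n.+1 = u * q ^+ n * pscale n.
Proof.
have exp_tau : - (n.+1%:R * tau) = - (n%:R * tau) + - tau by rewrite -natr1; ring.
have exp_tri : n.+1%:R * (n.+1%:R - 1) / 2 = n%:R * (n%:R - 1) / 2 + n%:R :> R.
  by rewrite -natr1; field.
have qpoch_pos : 0 < qpoch Q Q n by rewrite qpoch_gt0 // sqrq_gt0 sqrq_lt1.
have weightE : Num.sqrt (1 - Q * Q ^+ n) = weight q n.+1 by rewrite -exprS -exprM.
rewrite /pscale exp_tau exp_tri !powRqD powR_mulrn ?ltW // qpochS sqrtrM ?ltW //.
rewrite weightE; field.
by rewrite !gt_eqF ?weight_gt0 ?sqrtr_gt0.
Qed.

Lemma pscale_succ n : pscale n.+1 = u * q ^+ n * pscale n / weight q n.+1.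
Proof. by rewrite -weight_pscale; field; nonzero. Qed.

Lemma pscale_pred n :
  pscale n = (1 - Q ^+ n.+1) * pscale n.+1 / (u * q ^+ n * weight q n.+1).
Proof.
by rewrite -weight_sqr expr2 -[_ * _ * pscale _]mulrA weight_pscale; field; nonzero.
Qed.

Lemma phi21_qpoly n x : x != 0 ->
  phi21 (q ^+ (2 * n))^-1 (T / x) 0 Q (- Q * x) = P n x.
Proof.
move=> x_neq0; rewrite /phi21 exprM.
have summandE j : qpoch (Q ^+ n)^-1 Q j * qpoch (T / x) Q j
    / (qpoch Q Q j * qpoch 0 Q j) * (- Q * x) ^+ j = acoef Q n j * qbasis Q T x j.
  by rewrite qpoch_0l mulr1 (exprMn _ (- Q)) qbasisE // /acoef; ring.
under eq_fun => N do under eq_bigr => j _ do rewrite summandE.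
rewrite (limn_sum_finite_support (f := fun j => acoef Q n j * qbasis Q T x j)
  (N := n.+1)) // => j ltnj.
by rewrite acoef_eq0 ?mul0r.
Qed.

Lemma pn_qpoly n x : x != 0 -> pn q tau n x = pscale n * P n x.
Proof. by move=> x_neq0; rewrite /pn -phi21_qpoly. Qed.

Lemma jacobi_pn lam : lam != 0 ->
  jacobi q (qsinh q tau) (fun m => pn q tau m lam)
  = fun n => u * lam * pn q tau n lam.
Proof.
move=> lam_neq0; apply/funext => n; rewrite /jacobi /Adagseq /Cseq /Aseq qsinh_tau.
case: n => [|n] /=; rewrite !pn_qpoly //.
  by rewrite qpoly1 // qpoly0 pscale_succ powR_2tau !expr0; field; nonzero.
rewrite qpoly_recurrence // (pscale_pred n) (pscale_succ n.+1).
by rewrite !sqrq_exp !exprS powR_2tau; field; nonzero.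
Qed.

Lemma raise_pn lam : lam != 0 ->
  raise_part q (qsinh q tau) (fun m => pn q tau m lam)
  = fun n => q^-1 * ((1 - u ^+ 2 * lam) * (1 + lam)) * pn q tau n (lam / Q).
Proof.
move=> lam_neq0; apply/funext => n.
have lamQ_neq0 : lam / Q != 0 by rewrite mulf_neq0 // invr_neq0 // gt_eqF.
rewrite /raise_part /Cseq /Aseq qsinh_tau !pn_qpoly //.
rewrite [RHS](_ : _ = q^-1 * u ^+ 2 * pscale n * ((T - lam) * (1 + lam) * P n (lam / Q))).
  rewrite qpoly_raising // qpoly_recurrence // (pscale_succ n.+1) (pscale_succ n).
  by rewrite !sqrq_exp !exprS powR_2tau; field; nonzero.
by rewrite powR_2tau; field; nonzero.
Qed.

Lemma lower_pn lam : lam != 0 ->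
  lower_part q (qsinh q tau) (fun m => pn q tau m lam)
  = fun n => q * pn q tau n (lam * Q).
Proof.
move=> lam_neq0; apply/funext => n.
have lamQ_neq0 : lam * Q != 0 by rewrite mulf_neq0 // gt_eqF.
rewrite /lower_part /Cseq /Adagseq qsinh_tau.
case: n => [|[|n]] /=; rewrite !pn_qpoly // (mulrC lam).
- by rewrite !qpoly0 !expr0; ring.
- rewrite !qpoly1 // qpoly0 (pscale_pred 0) powR_2tau !expr0 !expr1.
  by field; nonzero.
rewrite qpoly_qshift // qpoly_recurrence // (pscale_pred n) (pscale_pred n.+1).
by rewrite !sqrq_exp !exprS powR_2tau; field; nonzero.
Qed.

End NormalizedPolynomials.

Theorem proposition6p2 (R : realType) (q tau sigma phi : R)
  (hq0 : 0 < q) (hq1 : q < 1) (hphi0 : 0 <= phi) (hphi1 : phi < 2 * pi)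
  (lam : R)
  (hlam : (exists k : nat, lam = - q ^+ (2 * k)) \/
          (exists k : nat, lam = powR q (2 * tau + 2 * k%:R))) :
  forall n : nat,
    2 * Rop q tau sigma phi (vlam q tau phi lam) n =
      (q%:C * expi (- (2 * phi))) * vlam q tau phi (lam * q ^+ 2) n
    + (q^-1%:C * expi (2 * phi) * ((1 - powR q (- (2 * tau)) * lam) * (1 + lam))%:C)
        * vlam q tau phi (lam / q ^+ 2) n
    + (lam * powR q (1 - tau) * (powR q (- sigma) - powR q sigma))%:C
        * vlam q tau phi lam n.
Proof.
have lam_neq0 : lam != 0.
  case: hlam => -[k ->]; first by rewrite oppr_eq0 expf_neq0 // gt_eqF.
  by rewrite gt_eqF // powR_gt0.
move=> n.
have vlam_gauge x : vlam q tau phi x n = gauge phi (fun m => pn q tau m x) n by [].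
rewrite !vlam_gauge Rop_gauge raise_pn ?lower_pn ?jacobi_pn // !gaugeZ.
rewrite powR_N2tau // powR_1Btau // /qsinh !rmorphM /=; ring.
Qed.
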